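(* Let $A$ be a MON-1qfa over $\Sigma$ and let $L_A\subseteq\Sigma^*$ be a language recognized by $A$ with cut-point $\lambda$ isolated by $\delta$. Then there exists a Latvian automaton $A'$ recognizing $L_{A'}=L_A$ with cut-point $\lambda'=\frac12$ isolated by $\delta'=\frac{\delta}{2\cdot\max(\lambda,1-\lambda)}$.
   Context: A MON-1qfa (measure-only one-way quantum finite automaton) over a finite alphabet $\Sigma$ is a tuple $A=\langle\Sigma\cup\{\#\},(O_c)_{c\in\Sigma\cup\{\#\}},\pi_0,F\rangle$, where $\pi_0\in\mathbb{C}^{1\times m}$ has norm $1$, each $O_c$ is an observable, i.e. a Hermitian $m\times m$ matrix with spectral decomposition $O_c=\sum_{r\in V(O_c)} r\,P_c(r)$ ($V(O_c)$ its set of eigenvalues, $P_c(r)$ the orthogonal projector onto the eigenspace of $r$), and $F\subseteq V(O_\#)$. On input $x=x_1\cdots x_n\in\Sigma^*$ the automaton starts in $\pi_0$, performs successively the measurements $O_{x_1},\dots,O_{x_n}$ and finally $O_\#$, and accepts iff the outcome of the last measurement lies in $F$. Formally, with $\rho_0=\pi_0^\dagger\pi_0$ and $\rho_i=\sum_{r\in V(O_{x_i})}P_{x_i}(r)\rho_{i-1}P_{x_i}(r)$, the acceptance probability is $p_A(x)=\sum_{r\in F}\mathrm{tr}(P_\#(r)\rho_n)$. A Latvian automaton is a one-way quantum automaton $A'=(Q,\Sigma,\{\mathcal{A}_a\},q_0,Q_{acc})$ with finite set of basis states $Q$, initial state $|q_0\rangle$, where for each $a\in\Sigma\cup\{\cent,\$\}$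 (with end-markers $\cent,\$$), $\mathcal{A}_a=M_aU_a$ consists of a unitary $U_a$ followed by a projective measurement $M_a$ (a family of orthogonal projectors summing to the identity), and $M_\$$ is the measurement with respect to the decomposition into the span of $Q_{acc}$ and its orthogonal complement; on input $w$ it processes $\cent w\$$ symbol by symbol (applying $U_a$ then $M_a$) and accepts iff the final measurement yields the accepting subspace; $p_{A'}(w)$ denotes the acceptance probability. An automaton $B$ with acceptance probability $p_B$ recognizes $L$ with cut-point $\lambda$ isolated by $\delta>0$ iff for all words $x$: $x\in L\Leftrightarrow p_B(x)>\lambda$, and $|p_B(x)-\lambda|\ge\delta$. *)

From mathcomp Require Import all_boot all_order all_algebra.
From mathcomp Require Import reals.
From mathcomp Require Import complex.
Set Implicit Arguments. Unset Strict Implicit. Unset Printing Implicit Defensive.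
Import Order.TTheory GRing.Theory Num.Theory.
Local Open Scope ring_scope.

Section QFA.
Variable R : realType.
Local Notation C := R[i].

Definition adj m n (A : 'M[C]_(m, n)) : 'M[C]_(n, m) := (map_mx (@conjc R) A)^T.

Definition hermitian n (A : 'M[C]_n) : Prop := adj A = A.

Definition is_orth_proj n (P : 'M[C]_n) : Prop := adj P = P /\ P *m P = P.

Definition unitary n (U : 'M[C]_n) : Prop := U *m adj U = 1%:M /\ adj U *m U = 1%:M.

Definition is_measurement n (Ps : seq 'M[C]_n) : Prop :=
  [/\ forall P, P \in Ps -> is_orth_proj P,
      forall i j, (i < size Ps)%N -> (j < size Ps)%N -> i != j ->
        nth 0 Ps i *m nth 0 Ps j = 0
    & \sum_(P <- Ps) P = 1%:M].

Definition spectral_decomp n (O : 'M[C]_n) (d : seq (R * 'M[C]_n)) : Prop :=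
  [/\ uniq (map fst d),
      forall p, p \in d -> p.2 != 0,
      is_measurement (map snd d)
    & O = \sum_(p <- d) (real_complex R p.1 *: p.2)].

(* MON-1qfa; the observable O_# is indexed by None, O_c by Some c. *)
Record mon1qfa (Sigma : finType) : Type := Mon1qfa {
  mq_m : nat;
  mq_O : option Sigma -> 'M[C]_mq_m;
  mq_dec : option Sigma -> seq (R * 'M[C]_mq_m);
  mq_pi0 : 'rV[C]_mq_m;
  mq_F : pred R;
  mq_herm : forall c, hermitian (mq_O c);
  mq_spec : forall c, spectral_decomp (mq_O c) (mq_dec c);
  mq_norm : mq_pi0 *m adj mq_pi0 = 1%:M;
  mq_Fsub : forall r, mq_F r -> r \in map fst (mq_dec None)
}.

Definition meas_step n (d : seq (R * 'M[C]_n)) (rho : 'M[C]_n) : 'M[C]_n :=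
  \sum_(p <- d) (p.2 *m rho *m p.2).

Definition mon_rho (Sigma : finType) (A : mon1qfa Sigma) (x : seq Sigma)
  : 'M[C]_(mq_m A) :=
  foldl (fun rho c => meas_step (mq_dec A (Some c)) rho)
        (adj (mq_pi0 A) *m mq_pi0 A) x.

(* acceptance probability p_A(x) (a real number: we take the real part of the
   complex trace, which is real) *)
Definition mon_prob (Sigma : finType) (A : mon1qfa Sigma) (x : seq Sigma) : R :=
  @complex.Re R (\sum_(p <- mq_dec A None | mq_F A p.1) \tr (p.2 *m mon_rho A x)).

Inductive esym (Sigma : Type) := ESym of Sigma | ECent | EDollar.

(* The measurement M_a is
   given for a in Sigma (Some a) and for ¢ (None); M_$ is fixed to be the
   measurement {span Q_acc, its orthogonal complement}. *)
Record latvian (Sigma : finType) : Type := Latvian {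
  lv_n : nat;
  lv_q0 : 'I_lv_n;
  lv_acc : {set 'I_lv_n};
  lv_U : esym Sigma -> 'M[C]_lv_n;
  lv_M : option Sigma -> seq 'M[C]_lv_n;
  lv_unitary : forall a, unitary (lv_U a);
  lv_meas : forall a, is_measurement (lv_M a)
}.

Definition lv_Pacc (Sigma : finType) (A : latvian Sigma) : 'M[C]_(lv_n A) :=
  diag_mx (\row_q (q \in lv_acc A)%:R).

Definition lat_step n (U : 'M[C]_n) (Ms : seq 'M[C]_n) (rho : 'M[C]_n) :=
  \sum_(P <- Ms) (P *m (U *m rho *m adj U) *m P).

Definition lat_rho (Sigma : finType) (A : latvian Sigma) (w : seq Sigma)
  : 'M[C]_(lv_n A) :=
  foldl (fun rho a => lat_step (lv_U A (ESym a)) (lv_M A (Some a)) rho)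
        (lat_step (lv_U A (ECent _)) (lv_M A None)
                  (delta_mx (lv_q0 A) (lv_q0 A))) w.

Definition lat_prob (Sigma : finType) (A : latvian Sigma) (w : seq Sigma) : R :=
  @complex.Re R (\tr (lv_Pacc A *m (lv_U A (EDollar _) *m lat_rho A w *m adj (lv_U A (EDollar _)))
           *m lv_Pacc A)).

Definition recognizes (Sigma : finType) (p : seq Sigma -> R)
  (L : seq Sigma -> Prop) (lambda delta : R) : Prop :=
  0 < delta /\
  forall x, (L x <-> lambda < p x) /\ delta <= `|p x - lambda|.

End QFA.

From Pilot Require Import Defs.
From mathcomp Require Import all_boot all_order all_algebra.
From mathcomp Require Import reals complex.
From mathcomp Require Import ring lra.
Set Implicit Arguments. Unset Strict Implicit. Unset Printing Implicit Defensive.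
Import Order.TTheory GRing.Theory Num.Theory.
Local Open Scope ring_scope.

(* The Latvian automaton lives on C^m (+) C^m and keeps its state in the
   upper-left block.  On the left end-marker it applies a unitary dilation of the
   rank-one partial isometry pi0^* e_0^*, which prepares the initial state
   pi0 of A from the basis state e_0; on a letter a it performs the
   block-diagonal copy of the measurement of O_a, so after reading w it holds
   exactly the density matrix of A after w.  On the right end-marker it
   applies the reflection [[T, S], [S, -T]] with T, S functions of the
   accepting projector Q of O_#, namely T = sqrt c1 Q + sqrt c2 (1 - Q) and
   S = sqrt (1 - c1) Q + sqrt (1 - c2) (1 - Q); the probability of landing in
   the upper half is then c1 p_A(w) + c2 (1 - p_A(w)).  Choosing c1, c2 in
   [0, 1] suitably makes this affine map send lambda to 1/2 while dividing
   distances by 2 max(lambda, 1 - lambda). *)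

Section Adjoint.
Variable R : realType.
Local Notation C := R[i].

Lemma adjM m n p (A : 'M[C]_(m, n)) (B : 'M[C]_(n, p)) :
  adj (A *m B) = adj B *m adj A.
Proof. by rewrite /adj map_mxM trmx_mul. Qed.

Lemma adjD m n (A B : 'M[C]_(m, n)) : adj (A + B) = adj A + adj B.
Proof. by rewrite /adj map_mxD linearD. Qed.

Lemma adjN m n (A : 'M[C]_(m, n)) : adj (- A) = - adj A.
Proof. by rewrite /adj map_mxN linearN. Qed.

Lemma adjB m n (A B : 'M[C]_(m, n)) : adj (A - B) = adj A - adj B.
Proof. by rewrite adjD adjN. Qed.

Lemma adj0 m n : adj (0 : 'M[C]_(m, n)) = 0.
Proof. by rewrite /adj map_mx0 trmx0. Qed.

Lemma adj1 n : adj (1%:M : 'M[C]_n) = 1%:M.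
Proof. by rewrite /adj map_mx1 trmx1. Qed.

Lemma adjK m n (A : 'M[C]_(m, n)) : adj (adj A) = A.
Proof. by apply/matrixP => i j; rewrite !mxE conjcK. Qed.

Lemma adjZ m n (k : C) (A : 'M[C]_(m, n)) : adj (k *: A) = conjc k *: adj A.
Proof. by apply/matrixP => i j; rewrite !mxE rmorphM. Qed.

Lemma adj_block_mx m1 m2 n1 n2 (Aul : 'M[C]_(m1, n1)) (Aur : 'M[C]_(m1, n2))
    (Adl : 'M[C]_(m2, n1)) (Adr : 'M[C]_(m2, n2)) :
  adj (block_mx Aul Aur Adl Adr) = block_mx (adj Aul) (adj Adl) (adj Aur) (adj Adr).
Proof. by rewrite /adj map_block_mx tr_block_mx. Qed.

Lemma adj_col_mx m1 m2 n (Au : 'M[C]_(m1, n)) (Ad : 'M[C]_(m2, n)) :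
  adj (col_mx Au Ad) = row_mx (adj Au) (adj Ad).
Proof. by rewrite /adj map_col_mx tr_col_mx. Qed.

Lemma adj_delta_mx m n (i : 'I_m) (j : 'I_n) :
  adj (delta_mx i j : 'M[C]_(m, n)) = delta_mx j i.
Proof. by apply/matrixP => a b; rewrite !mxE conjc_nat andbC. Qed.

End Adjoint.

Section UnitaryConstructions.
Variable R : realType.
Local Notation C := R[i].

Definition unitary_dilation n (X : 'M[C]_n) : 'M[C]_(n + n) :=
  block_mx X (1%:M - X *m adj X) (1%:M - adj X *m X) (- adj X).

Lemma unitary_dilation_unitary n (X : 'M[C]_n) :
  X *m adj X *m X = X -> unitary (unitary_dilation X).
Proof.
move=> XX'X.
have X'XX' : adj X *m X *m adj X = adj X.
  by have := congr1 (@adj R n n) XX'X; rewrite !adjM adjK mulmxA.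
rewrite /unitary /unitary_dilation adj_block_mx !adjB !adjN adj1 !adjM adjK.
rewrite !mulmx_block.
rewrite !(mulmxBl, mulmxBr, mul1mx, mulmx1, mulmxN, mulNmx, opprK, mulmxA,
          XX'X, X'XX').
rewrite !subrr !subr0 !addNr !addr0 !subrK [X *m adj X + _]addrC.
by rewrite [adj X *m X + _]addrC !subrK -scalar_mx_block.
Qed.

Lemma rank_one_partial_isometry n (v e : 'cV[C]_n) :
  adj v *m v = 1%:M -> adj e *m e = 1%:M ->
  v *m adj e *m adj (v *m adj e) *m (v *m adj e) = v *m adj e.
Proof.
move=> hv he; rewrite adjM adjK.
by rewrite !mulmxA -(mulmxA v) he mulmx1 -(mulmxA v) hv mulmx1.
Qed.

Lemma unitary_dilation_rank_one n (v e : 'cV[C]_n) :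
  adj v *m v = 1%:M -> adj e *m e = 1%:M ->
  unitary_dilation (v *m adj e) *m col_mx e 0 = col_mx v 0.
Proof.
move=> hv he; rewrite /unitary_dilation mul_block_col !mulmx0 !addr0.
rewrite -mulmxA he mulmx1 adjM adjK mulmxBl mul1mx -!mulmxA he mulmx1 hv.
by rewrite mulmx1 subrr.
Qed.

Definition proj_comb n (Q : 'M[C]_n) (x y : C) := x *: Q + y *: (1%:M - Q).

Lemma proj_combM n (Q : 'M[C]_n) x y x' y' : Q *m Q = Q ->
  proj_comb Q x y *m proj_comb Q x' y' = proj_comb Q (x * x') (y * y').
Proof.
move=> QQ.
have QQ' : Q *m (1%:M - Q) = 0 by rewrite mulmxBr QQ mulmx1 subrr.
have Q'Q : (1%:M - Q) *m Q = 0 by rewrite mulmxBl QQ mul1mx subrr.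
have Q'Q' : (1%:M - Q) *m (1%:M - Q) = 1%:M - Q by rewrite mulmxBl mul1mx QQ' subr0.
rewrite /proj_comb mulmxDl !mulmxDr -!scalemxAl -!scalemxAr QQ' Q'Q Q'Q' QQ.
by rewrite !scaler0 addr0 add0r !scalerA.
Qed.

Lemma proj_combD n (Q : 'M[C]_n) x y x' y' :
  proj_comb Q x y + proj_comb Q x' y' = proj_comb Q (x + x') (y + y').
Proof. by rewrite /proj_comb !scalerDl addrACA. Qed.

Lemma proj_comb11 n (Q : 'M[C]_n) : proj_comb Q 1 1 = 1%:M.
Proof. by rewrite /proj_comb !scale1r addrC subrK. Qed.

Lemma adj_proj_comb n (Q : 'M[C]_n) x y :
  adj Q = Q -> adj (proj_comb Q x y) = proj_comb Q (conjc x) (conjc y).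
Proof. by move=> hQ; rewrite /proj_comb adjD !adjZ adjB adj1 hQ. Qed.

Lemma mxtrace_proj_comb n (Q rho : 'M[C]_n) x y :
  \tr (proj_comb Q x y *m rho) =
  x * \tr (Q *m rho) + y * (\tr rho - \tr (Q *m rho)).
Proof.
rewrite /proj_comb mulmxDl -!scalemxAl mulmxBl mul1mx mxtraceD !mxtraceZ.
by rewrite (raddfB (@mxtrace _ n)).
Qed.

Definition reflection_mx n (T S : 'M[C]_n) : 'M[C]_(n + n) :=
  block_mx T S S (- T).

Lemma reflection_mx_unitary n (T S : 'M[C]_n) :
  adj T = T -> adj S = S -> T *m S = S *m T -> T *m T + S *m S = 1%:M ->
  unitary (reflection_mx T S).
Proof.
move=> hT hS TS TTSS.
have selfadj : adj (reflection_mx T S) = reflection_mx T S.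
  by rewrite /reflection_mx adj_block_mx adjN hT hS.
rewrite /unitary selfadj /reflection_mx mulmx_block !(mulNmx, mulmxN, opprK).
by rewrite TS subrr [S *m S + _]addrC TTSS -scalar_mx_block.
Qed.

Lemma mxtrace_reflection_corner n (T S rho : 'M[C]_n) :
  adj T = T -> adj S = S ->
  let P := block_mx 1%:M 0 0 (0 : 'M[C]_n) in
  \tr (P *m (reflection_mx T S *m block_mx rho 0 0 0 *m adj (reflection_mx T S)) *m P)
  = \tr (T *m T *m rho).
Proof.
move=> hT hS P; rewrite /P /reflection_mx adj_block_mx adjN hT hS.
do 4 rewrite mulmx_block ?mulmx0 ?mul0mx ?mulmx1 ?mul1mx ?addr0 ?add0r.
by rewrite mxtrace_block mxtrace0 addr0 mxtrace_mulC mulmxA.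
Qed.

End UnitaryConstructions.

Section Measurements.
Variable R : realType.
Local Notation C := R[i].

Lemma measurement_decompP n (d : seq (R * 'M[C]_n)) :
  is_measurement (map snd d) ->
  [/\ forall p, p \in d -> is_orth_proj p.2,
      forall i j, (i < size d)%N -> (j < size d)%N -> i != j ->
        (nth (0, 0) d i).2 *m (nth (0, 0) d j).2 = 0
    & \sum_(p <- d) p.2 = 1%:M].
Proof.
case=> proj orth sum1; split.
- by move=> p hp; apply/proj/map_f.
- move=> i j hi hj; have := orth i j; rewrite size_map !(nth_map (0, 0)) //.
  exact.
- by rewrite big_map in sum1.
Qed.

Lemma orth_proj_sum_filter n (d : seq (R * 'M[C]_n)) (f : pred R) :
  (forall p, p \in d -> is_orth_proj p.2) ->
  (forall i j, (i < size d)%N -> (j < size d)%N -> i != j ->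
     (nth (0, 0) d i).2 *m (nth (0, 0) d j).2 = 0) ->
  is_orth_proj (\sum_(p <- d | f p.1) p.2).
Proof.
elim: d => [|p d IH] proj orth; first by rewrite !big_nil /is_orth_proj adj0 mul0mx.
have [IH1 IH2] : is_orth_proj (\sum_(q <- d | f q.1) q.2).
  apply: IH => [q hq|i j hi hj hij]; first by apply: proj; rewrite inE hq orbT.
  exact: (orth i.+1 j.+1).
have [P1 P2] := proj p (mem_head _ _).
have pq0 q : q \in d -> p.2 *m q.2 = 0.
  by move=> hq; have := orth 0%N (index q d).+1 isT; rewrite /= nth_index // ltnS index_mem; apply.
have qp0 q : q \in d -> q.2 *m p.2 = 0.
  by move=> hq; have := orth (index q d).+1 0%N; rewrite /= nth_index // ltnS index_mem; apply.
rewrite big_cons; case: (f p.1) => //.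
split; first by rewrite adjD P1 IH1.
rewrite mulmxDl !mulmxDr P2 IH2 mulmx_sumr mulmx_suml.
rewrite big1_seq; last by move=> q /andP[_ /pq0].
by rewrite big1_seq ?addr0 ?add0r // => q /andP[_ /qp0].
Qed.

Lemma mxtrace_meas_step n (d : seq (R * 'M[C]_n)) rho :
  is_measurement (map snd d) -> \tr (meas_step d rho) = \tr rho.
Proof.
case/measurement_decompP => proj _ sum1.
rewrite /meas_step raddf_sum /= (eq_big_seq (fun p => \tr (p.2 *m rho))).
  by rewrite -raddf_sum -mulmx_suml sum1 mul1mx.
by move=> p /proj[_ PP]; rewrite mxtrace_mulC mulmxA PP.
Qed.

Definition diag2_mx n (P : 'M[C]_n) : 'M[C]_(n + n) := block_mx P 0 0 P.

Lemma sum_diag2_mx n (I : Type) (r : seq I) (F : I -> 'M[C]_n) :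
  \sum_(i <- r) diag2_mx (F i) = diag2_mx (\sum_(i <- r) F i).
Proof.
elim: r => [|a r IH]; first by rewrite !big_nil /diag2_mx block_mx0.
by rewrite !big_cons IH /diag2_mx add_block_mx !addr0.
Qed.

Lemma measurement_diag2 n (Ps : seq 'M[C]_n) :
  is_measurement Ps -> is_measurement (map (@diag2_mx n) Ps).
Proof.
case=> proj orth sum1; split.
- move=> _ /mapP[P /proj[PP' PP] ->]; rewrite /is_orth_proj /diag2_mx.
  by rewrite adj_block_mx adj0 mulmx_block PP' PP !mulmx0 !mul0mx !addr0 !add0r.
- move=> i j; rewrite size_map => hi hj hij; rewrite !(nth_map 0) //.
  by rewrite /diag2_mx mulmx_block !mulmx0 !mul0mx !addr0 !add0r orth // block_mx0.
- by rewrite big_map sum_diag2_mx sum1 /diag2_mx -scalar_mx_block.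
Qed.

Lemma sum_ul_block n (I : Type) (r : seq I) (F : I -> 'M[C]_n) :
  \sum_(i <- r) block_mx (F i) 0 0 0 = block_mx (\sum_(i <- r) F i) 0 0 (0 : 'M[C]_n).
Proof.
elim: r => [|a r IH]; first by rewrite !big_nil block_mx0.
by rewrite !big_cons IH add_block_mx !addr0.
Qed.

Lemma lat_step_diag2 n (d : seq (R * 'M[C]_n)) rho :
  lat_step 1%:M (map (@diag2_mx n) (map snd d)) (block_mx rho 0 0 0) =
  block_mx (meas_step d rho) 0 0 0.
Proof.
rewrite /lat_step /meas_step adj1 mul1mx mulmx1 !big_map -sum_ul_block.
apply: eq_bigr => p _.
by rewrite /diag2_mx !mulmx_block !mulmx0 !mul0mx !addr0 !(mul0mx _ p.2) !add0r.
Qed.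

End Measurements.

Lemma ReD (R : realType) (a b : R[i]) : complex.Re (a + b) = complex.Re a + complex.Re b.
Proof. by case: a; case: b. Qed.

Lemma ReB (R : realType) (a b : R[i]) : complex.Re (a - b) = complex.Re a - complex.Re b.
Proof. by case: a; case: b. Qed.

Lemma Re_realM (R : realType) (k : R) (a : R[i]) :
  complex.Re (real_complex R k * a) = k * complex.Re a.
Proof. by case: a => x y /=; rewrite mul0r subr0. Qed.

Section Simulation.
Variables (R : realType) (Sigma : finType) (A : mon1qfa R Sigma).
Local Notation C := R[i].
Local Notation m := (mq_m A).

Lemma mq_m_gt0 : (0 < m)%N.
Proof.
rewrite lt0n; apply/eqP => m0.
have := congr1 (fun M : 'M[C]_1 => M 0 0) (mq_norm A).
rewrite /= !mxE big1 => [|k _]; last by have := ltn_ord k; rewrite {2}m0.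
by move/eqP; rewrite eq_sym oner_eq0.
Qed.

Definition start_vec : 'cV[C]_m := delta_mx (Ordinal mq_m_gt0) 0.

Definition acc_proj : 'M[C]_m := \sum_(p <- mq_dec A None | mq_F A p.1) p.2.

Lemma acc_proj_orth : is_orth_proj acc_proj.
Proof.
have [_ _ meas _] := mq_spec A None.
by have [proj orth _] := measurement_decompP meas; apply: orth_proj_sum_filter.
Qed.

Lemma mon_probE x : mon_prob A x = complex.Re (\tr (acc_proj *m mon_rho A x)).
Proof. by rewrite /mon_prob /acc_proj mulmx_suml (raddf_sum (@mxtrace _ m)). Qed.

Lemma mxtrace_mon_rho x : \tr (mon_rho A x) = 1.
Proof.
rewrite /mon_rho.
have : \tr (adj (mq_pi0 A) *m mq_pi0 A) = 1 by rewrite mxtrace_mulC mq_norm mxtrace1.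
elim: x (adj (mq_pi0 A) *m mq_pi0 A) => [|a x IH] rho //= tr1.
have [_ _ meas _] := mq_spec A (Some a).
by apply: IH; rewrite mxtrace_meas_step.
Qed.

Variables c1 c2 : R.
Hypotheses (c1_01 : 0 <= c1 <= 1) (c2_01 : 0 <= c2 <= 1).

Let sqrtc (c : R) : C := real_complex R (Num.sqrt c).

Lemma sqrtcJ c : conjc (sqrtc c) = sqrtc c.
Proof. by rewrite /sqrtc conjc_real. Qed.

Lemma sqrtcM c : 0 <= c -> sqrtc c * sqrtc c = real_complex R c.
Proof. by move=> c_ge0; rewrite /sqrtc -rmorphM /= -expr2 sqr_sqrtr. Qed.

Definition acc_transmit := proj_comb acc_proj (sqrtc c1) (sqrtc c2).
Definition acc_reflect := proj_comb acc_proj (sqrtc (1 - c1)) (sqrtc (1 - c2)).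

Lemma adj_acc_transmit : adj acc_transmit = acc_transmit.
Proof. by rewrite adj_proj_comb ?(proj1 acc_proj_orth) ?sqrtcJ. Qed.

Lemma adj_acc_reflect : adj acc_reflect = acc_reflect.
Proof. by rewrite adj_proj_comb ?(proj1 acc_proj_orth) ?sqrtcJ. Qed.

Lemma acc_reflection_unitary : unitary (reflection_mx acc_transmit acc_reflect).
Proof.
have [_ QQ] := acc_proj_orth.
move: c1_01 c2_01 => /andP[c1_ge0 c1_le1] /andP[c2_ge0 c2_le1].
apply: reflection_mx_unitary.
- exact: adj_acc_transmit.
- exact: adj_acc_reflect.
- by rewrite !(proj_combM _ _ _ _ QQ) [sqrtc c1 * _]mulrC [sqrtc c2 * _]mulrC.
rewrite !(proj_combM _ _ _ _ QQ) proj_combD !sqrtcM ?subr_ge0 //.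
by rewrite -!rmorphD /= !subrKC rmorph1 proj_comb11.
Qed.

Definition sim_U (a : Defs.esym Sigma) : 'M[C]_(m + m) :=
  match a with
  | ESym _ => 1%:M
  | ECent => unitary_dilation (adj (mq_pi0 A) *m adj start_vec)
  | EDollar => reflection_mx acc_transmit acc_reflect
  end.

Definition sim_M (o : option Sigma) : seq 'M[C]_(m + m) :=
  if o is Some a then map (@diag2_mx R m) (map snd (mq_dec A (Some a)))
  else [:: 1%:M].

Lemma pi0_adj_norm : adj (adj (mq_pi0 A)) *m adj (mq_pi0 A) = 1%:M.
Proof. by rewrite adjK mq_norm. Qed.

Lemma start_vec_norm : adj start_vec *m start_vec = 1%:M.
Proof.
by rewrite adj_delta_mx mul_delta_mx; apply/matrixP => i j; rewrite !ord1 !mxE.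
Qed.

Lemma sim_U_unitary a : unitary (sim_U a).
Proof.
case: a => [a||] /=.
- by rewrite /unitary adj1 mulmx1.
- apply/unitary_dilation_unitary/rank_one_partial_isometry.
    exact: pi0_adj_norm.
  exact: start_vec_norm.
- exact: acc_reflection_unitary.
Qed.

Lemma sim_M_measurement o : is_measurement (sim_M o).
Proof.
case: o => [a|] /=.
  by have [_ _ meas _] := mq_spec A (Some a); apply: measurement_diag2.
split=> [P|[|i] [|j]|] //; last by rewrite big_seq1.
by rewrite inE => /eqP ->; rewrite /is_orth_proj adj1 mulmx1.
Qed.

Definition simulator : latvian R Sigma :=
  @Latvian R Sigma (m + m) (lshift m (Ordinal mq_m_gt0)) [set q : 'I_(m + m) | (q < m)%N]
    sim_U sim_M sim_U_unitary sim_M_measurement.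

Lemma simulator_Pacc : lv_Pacc simulator = block_mx 1%:M 0 0 0.
Proof.
rewrite /lv_Pacc /= -(pid_mx_block _ m m m).
apply/matrixP => i j; rewrite !mxE inE.
have -> : (val i == val j) = (i == j) by [].
by case: (i == j); rewrite ?mulr1n ?mulr0n.
Qed.

Lemma simulator_rho x : lat_rho simulator x = block_mx (mon_rho A x) 0 0 0.
Proof.
have init : lat_step (sim_U (ECent _)) (sim_M None)
    (delta_mx (lshift m (Ordinal mq_m_gt0)) (lshift m (Ordinal mq_m_gt0)))
    = block_mx (adj (mq_pi0 A) *m mq_pi0 A) 0 0 0.
  rewrite /lat_step big_seq1 mul1mx mulmx1 /=.
  have -> : delta_mx (lshift m (Ordinal mq_m_gt0)) (lshift m (Ordinal mq_m_gt0)) =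
      col_mx start_vec 0 *m adj (col_mx start_vec 0 : 'cV[C]_(m + m)).
    by rewrite -delta_mx_ushift adj_delta_mx mul_delta_mx.
  rewrite !mulmxA unitary_dilation_rank_one ?start_vec_norm ?pi0_adj_norm //.
  rewrite -mulmxA -[adj (col_mx start_vec 0) *m _]adjM.
  rewrite unitary_dilation_rank_one ?start_vec_norm ?pi0_adj_norm //.
  by rewrite adj_col_mx adj0 mul_col_row mul0mx mulmx0 adjK mul0mx.
rewrite /lat_rho /mon_rho init.
elim: x (adj (mq_pi0 A) *m mq_pi0 A) => [|a x IH] rho //=.
by rewrite lat_step_diag2 IH.
Qed.

Lemma simulator_prob x :
  lat_prob simulator x = c1 * mon_prob A x + c2 * (1 - mon_prob A x).
Proof.
have [_ QQ] := acc_proj_orth.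
move: c1_01 c2_01 => /andP[c1_ge0 _] /andP[c2_ge0 _].
rewrite /lat_prob simulator_Pacc simulator_rho /= mxtrace_reflection_corner;
  rewrite ?adj_acc_transmit ?adj_acc_reflect //.
rewrite (proj_combM _ _ _ _ QQ) !sqrtcM // mxtrace_proj_comb mxtrace_mon_rho mon_probE.
by rewrite ReD !Re_realM ReB.
Qed.

End Simulation.

Lemma recognizes_rescale (R : realType) (Sigma : finType) (p p' : seq Sigma -> R)
    (L : seq Sigma -> Prop) (lambda delta k : R) :
  0 < k -> (forall x, p' x - 1 / 2 = (p x - lambda) / k) ->
  recognizes p L lambda delta -> recognizes p' L (1 / 2) (delta / k).
Proof.
move=> k_gt0 p'E [delta_gt0 rec]; split; first by rewrite divr_gt0.
move=> x; have [Lx isol] := rec x; split.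
  by rewrite Lx -subr_gt0 -(subr_gt0 _ (p' x)) p'E pmulr_lgt0 ?invr_gt0.
by rewrite p'E normrM [`|k^-1|]gtr0_norm ?invr_gt0 // ler_pM2r ?invr_gt0.
Qed.

Lemma exists_cutpoint_weights (R : realType) (lambda : R) :
  exists c1 c2 : R, [/\ 0 <= c1 <= 1, 0 <= c2 <= 1 &
    forall p, c1 * p + c2 * (1 - p) - 1 / 2 =
              (p - lambda) / (2 * Num.max lambda (1 - lambda))].
Proof.
set M := Num.max lambda (1 - lambda).
have le_lambda : lambda <= M by rewrite le_max lexx.
have le_lambda' : 1 - lambda <= M by rewrite le_max lexx orbT.
set t := (2 * M)^-1.
have tM : t * (2 * M) = 1 by rewrite mulVf //; lra.
have t_gt0 : 0 < t by rewrite invr_gt0; lra.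
exists (1 / 2 + (1 - lambda) * t), (1 / 2 - lambda * t).
by split; [apply/andP; split; nra | apply/andP; split; nra | move=> p; ring].
Qed.

Theorem theorem2 (R : realType) (Sigma : finType) (A : mon1qfa R Sigma)
  (L : seq Sigma -> Prop) (lambda delta : R) :
  recognizes (mon_prob A) L lambda delta ->
  exists A' : latvian R Sigma,
    recognizes (lat_prob A') L (1 / 2)
      (delta / (2 * Num.max lambda (1 - lambda))).
Proof.
move=> rec.
have [c1 [c2 [c1_01 c2_01 affineE]]] := exists_cutpoint_weights lambda.
exists (simulator A c1_01 c2_01).
apply: recognizes_rescale rec => [|x]; last by rewrite simulator_prob affineE.
have : lambda <= Num.max lambda (1 - lambda) by rewrite le_max lexx.
have : 1 - lambda <= Num.max lambda (1 - lambda) by rewrite le_max lexx orbT.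
lra.
Qed.
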